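(* Let $E_{(r_1,\dots,r_n)}^{(v_1,\dots,v_n)}$ be an $n$-induced $\mathbb{Z}$-grading on $E$. If there exist $i,j\in\{1,\dots,n\}$ such that $r_i<0<r_j$, $\gcd(r_i,r_j)=1$ and $v_i=v_j=\infty$, then $E_{(r_1,\dots,r_n)}^{(v_1,\dots,v_n)}$ is of full support (its support is $\mathbb{Z}$).
   Context: $E$ is the Grassmann algebra of an infinite-dimensional vector space $L$ with basis $e_1,e_2,\dots$ (basis $1$, $e_{i_1}\cdots e_{i_k}$ with $i_1<\dots<i_k$; $e_ie_j=-e_je_i$). For pairwise distinct integers $r_1,\dots,r_n$ and $v_1,\dots,v_n\in\mathbb{N}\cup\{\infty\}$, the $n$-induced $\mathbb{Z}$-grading $E_{(r_1,\dots,r_n)}^{(v_1,\dots,v_n)}=\bigoplus_rA_r$ is obtained by splitting $\{e_i\}$ into $n$ disjoint sets of cardinalities $v_1,\dots,v_n$, giving elements of the $j$-th set degree $r_j$ and monomials the sum of the degrees of their factors; its support is $\{r:A_r\ne0\}$. *)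

From HB Require Import structures.
From mathcomp Require Import all_boot all_order all_algebra.
From mathcomp Require Import finmap.
Set Implicit Arguments. Unset Strict Implicit. Unset Printing Implicit Defensive.
Import Order.TTheory GRing.Theory Num.Theory.
Local Open Scope ring_scope.
Local Open Scope fset_scope.

(* The Grassmann algebra E over a field K on basis e_i (i : nat).
   Its canonical basis consists of the monomials e_{i1}...e_{ik}, i1<...<ik,
   encoded by the finite set {i1,...,ik} : {fset nat} (empty set = 1).
   As a K-vector space, E is the space of finitely supported coordinate
   functions {fset nat} -> K (coefficients w.r.t. the monomial basis). *)
Definition grassmann_elt (K : fieldType) (x : {fset nat} -> K) : Prop :=
  exists s : seq {fset nat}, forall m, x m != 0 -> m \in s.

(* A splitting of the basis {e_i} into n disjoint sets: part i is the index
   of the set containing e_i.  card_is P v : the set {i | P i} has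
   cardinality v, with None standing for infinity. *)
Definition card_is (P : nat -> bool) (v : option nat) : Prop :=
  match v with
  | Some k => exists s : seq nat, [/\ uniq s, size s = k & forall i, P i = (i \in s)]
  | None => forall N : nat, exists i : nat, (N <= i)%N /\ P i
  end.

Definition is_splitting (n : nat) (v : 'I_n -> option nat) (part : nat -> 'I_n) : Prop :=
  forall j : 'I_n, card_is (fun i => part i == j) (v j).

Definition mon_deg (n : nat) (r : 'I_n -> int) (part : nat -> 'I_n) (m : {fset nat}) : int :=
  \sum_(i <- m) r (part i).

Definition homog_comp (K : fieldType) (n : nat) (r : 'I_n -> int) (part : nat -> 'I_n)
  (d : int) (x : {fset nat} -> K) : Prop :=
  grassmann_elt x /\ forall m, x m != 0 -> mon_deg r part m = d.

Definition in_support (K : fieldType) (n : nat) (r : 'I_n -> int) (part : nat -> 'I_n)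
  (d : int) : Prop :=
  exists x : {fset nat} -> K, homog_comp r part d x /\ x <> (fun _ => 0).

From HB Require Import structures.
From mathcomp Require Import all_boot all_order all_algebra.
From mathcomp Require Import finmap.
From mathcomp Require Import zify.
Import Order.TTheory GRing.Theory Num.Theory.
Local Open Scope ring_scope.

(* Bezout writes d as a combination of r_i < 0 < r_j; shifting it by a large
   multiple of r_i r_j - r_j r_i = 0 makes both coefficients p, q nonnegative.
   Since v_i = v_j = infinity, one may pick p basis vectors of degree r_i and
   q of degree r_j, all distinct; their product is a monomial of degree d. *)

Lemma unbounded_uniq_seq (P : pred nat) (k : nat) :
  card_is P None -> exists s : seq nat, [/\ uniq s, size s = k & all P s].
Proof.
move=> P_unbounded; elim: k => [|k [s [s_uniq s_size s_P]]]; first by exists [::].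
have [x [max_lt_x Px]] := P_unbounded (\max_(y <- s) y).+1.
exists (x :: s); split=> /=; [|by rewrite s_size|by rewrite Px].
rewrite s_uniq andbT; apply/negP => x_in_s.
by move: max_lt_x; rewrite ltnNge (leq_bigmax_seq _ x_in_s).
Qed.

Lemma gcdz1_nonneg_combination (a b d : int) :
  a < 0 < b -> gcdz a b = 1 -> exists p q : nat, d = p%:Z * a + q%:Z * b.
Proof.
move=> /andP[a_lt0 b_gt0] gcd_ab.
have [u [w uw]] := Bezoutz a b; rewrite gcd_ab in uw.
pose k := (absz (d * u)%R + absz (d * w)%R)%N.
exists (absz (d * u + k%:Z * b)%R), (absz (d * w - k%:Z * a)%R).
have k_le_kb : k%:Z <= k%:Z * b by rewrite ler_peMr // -gtz0_ge1.
have k_le_kNa : k%:Z <= k%:Z * - a by rewrite ler_peMr // -gtz0_ge1 oppr_gt0.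
rewrite !gez0_abs; first by rewrite -[LHS]mulr1 -uw; lia.
- by move: k_le_kNa; rewrite /k mulrN; lia.
- by move: k_le_kb; rewrite /k; lia.
Qed.

Section Monomials.

Variables (K : fieldType) (n : nat) (r : 'I_n -> int) (part : nat -> 'I_n).

Lemma in_support_mon_deg (m : {fset nat}) : in_support K r part (mon_deg r part m).
Proof.
exists (fun m' => if m' == m then 1 else 0); split.
  split; first by exists [:: m] => m'; case: (m' =P m) => [->|]; rewrite ?mem_seq1 ?eqxx.
  by move=> m'; case: (m' =P m) => [->|]; last rewrite eqxx.
by move/(congr1 (fun x => x m)) => /eqP; rewrite eqxx oner_eq0.
Qed.

Lemma mon_deg_seq_fset (s : seq nat) :
  uniq s -> mon_deg r part (seq_fset tt s) = \sum_(x <- s) r (part x).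
Proof. by move=> s_uniq; rewrite /mon_deg (perm_big _ (seq_fset_perm _ _)) undup_id. Qed.

Lemma sum_deg_in_part (j : 'I_n) (s : seq nat) :
  all (fun x => part x == j) s -> \sum_(x <- s) r (part x) = r j *+ size s.
Proof.
move=> /allP s_in_j; rewrite (eq_big_seq (fun=> r j)); last by move=> x /s_in_j /eqP ->.
by rewrite big_const_seq count_predT iter_addr_0.
Qed.

Lemma in_support_two_parts (i j : 'I_n) (p q : nat) :
  i != j -> card_is (fun x => part x == i) None -> card_is (fun x => part x == j) None ->
  in_support K r part (p%:Z * r i + q%:Z * r j).
Proof.
move=> neq_ij /(@unbounded_uniq_seq _ p) [si [si_uniq si_size si_i]].
move=> /(@unbounded_uniq_seq _ q) [sj [sj_uniq sj_size sj_j]].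
have disjoint_ij : uniq (si ++ sj).
  rewrite cat_uniq si_uniq sj_uniq andbT; apply/hasPn => x /(allP sj_j) /eqP x_j.
  by apply: contraNN neq_ij => /(allP si_i) /eqP <-; rewrite x_j.
have := in_support_mon_deg (seq_fset tt (si ++ sj)).
rewrite mon_deg_seq_fset // big_cat /= (sum_deg_in_part _ _ si_i) (sum_deg_in_part _ _ sj_j).
by rewrite si_size sj_size -[r i *+ _]mulr_natl -[r j *+ _]mulr_natl !natz.
Qed.

End Monomials.

Theorem proposition5p1 (K : fieldType) (n : nat) (r : 'I_n -> int)
  (v : 'I_n -> option nat) (part : nat -> 'I_n) :
  injective r ->
  is_splitting v part ->
  (exists i j : 'I_n, [/\ r i < 0 < r j, gcdz (r i) (r j) = 1,
                          v i = None & v j = None]) ->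
  forall d : int, in_support K r part d.
Proof.
move=> _ splitting [i [j [sign_ij gcd_ij vi vj]]] d.
have [p [q ->]] := @gcdz1_nonneg_combination _ _ d sign_ij gcd_ij.
apply: in_support_two_parts; last 2 first.
- by rewrite -vi; apply: splitting.
- by rewrite -vj; apply: splitting.
- by apply: contraTneq sign_ij => ->; rewrite lt_asym.
Qed.
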